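(* Let $N\geq1$, $\lambda>0$, and $\alpha_1,\ldots,\alpha_N\geq0$. Consider the problem $\max_{p\in\Delta_N}\ell(p):=\sum_{i=1}^N\frac{p_i}{1+2\lambda p_i}\alpha_i$. Let $(\ell_1,\ldots,\ell_N)$ be a permutation of $\{1,\ldots,N\}$ such that $\alpha_{\ell_1}\leq\cdots\leq\alpha_{\ell_N}$, with $\alpha_{\ell_N}>0$, and let $A_i=\{\ell_1,\ldots,\ell_i\}$ for $i\in\{1,\ldots,N\}$, $A_0=\emptyset$. Define $k=\min\left\{i\in\{0,\ldots,N-1\}:(N-i+2\lambda)\sqrt{\alpha_{\ell_{i+1}}}>\sum_{j\notin A_i}\sqrt{\alpha_j}\right\}$. Then $\overline{p}\in\mathbb{R}^N$ defined by $\overline{p}_i=0$ if $i\in A_k$ and $\overline{p}_i=\frac{1}{2\lambda}\left[\frac{(N-k+2\lambda)\sqrt{\alpha_i}}{\sum_{j\notin A_k}\sqrt{\alpha_j}}-1\right]$ if $i\notin A_k$, is the solution of this problem.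
   Context: $\Delta_N=\{p\in\mathbb{R}_+^N:\sum_{i=1}^Np_i=1\}$. *)

From HB Require Import structures.
From mathcomp Require Import all_boot all_order all_algebra all_fingroup.
From mathcomp Require Import all_reals.
Set Implicit Arguments. Unset Strict Implicit. Unset Printing Implicit Defensive.
Import Order.TTheory GRing.Theory Num.Theory.
Local Open Scope ring_scope.

Definition simplex (R : realType) (N : nat) (p : 'I_N -> R) : Prop :=
  (forall i, 0 <= p i) /\ \sum_(i < N) p i = 1.

Definition objective (R : realType) (N : nat) (lam : R) (alpha : 'I_N -> R)
  (p : 'I_N -> R) : R :=
  \sum_(i < N) p i / (1 + 2 * lam * p i) * alpha i.

(* A_i = { l_1, ..., l_i } (0-indexed: the images of the first i positions). *)
Definition Aset (N : nat) (l : {perm 'I_N}) (i : nat) : {set 'I_N} :=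
  l @: [set j : 'I_N | (j < i)%N].

(* Condition defining k, for i in {0,...,N-1} (l_{i+1} is l i in 0-indexing):
   (N - i + 2 lambda) sqrt(alpha_{l_{i+1}}) > sum_{j notin A_i} sqrt(alpha_j). *)
Definition kcond (R : realType) (N : nat) (lam : R) (alpha : 'I_N -> R)
  (l : {perm 'I_N}) (i : 'I_N) : Prop :=
  \sum_(j < N | j \notin Aset l i) Num.sqrt (alpha j)
    < ((N - i)%:R + 2 * lam) * Num.sqrt (alpha (l i)).

Definition pbar (R : realType) (N : nat) (lam : R) (alpha : 'I_N -> R)
  (l : {perm 'I_N}) (k : nat) (i : 'I_N) : R :=
  if i \in Aset l k then 0
  else (2 * lam)^-1 *
       (((N - k)%:R + 2 * lam) * Num.sqrt (alpha i)
          / (\sum_(j < N | j \notin Aset l k) Num.sqrt (alpha j)) - 1).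

(* Each summand x |-> alpha_i x / (1 + 2 lam x) is concave, so pbar is optimal
   as soon as, for one multiplier mu, every pbar_i maximizes
   x |-> alpha_i x / (1 + 2 lam x) - mu x over x >= 0: summing, and using
   sum p = sum pbar = 1, gives ell(p) <= ell(pbar), strictly when p <> pbar.
   Completing the square shows that for mu = c^2 this maximizer is
   max(0, (sqrt alpha_i / c - 1) / (2 lam)).  With
   c = (sum_{j notin A_k} sqrt alpha_j) / (N - k + 2 lam), the minimality of k
   gives sqrt alpha_i <= c exactly on A_k, so the maximizers are the
   coordinates of pbar, and they sum to 1. *)

From HB Require Import structures.
From mathcomp Require Import all_boot all_order all_algebra all_fingroup.
From mathcomp Require Import all_reals.
From mathcomp Require Import ring lra zify.

Set Implicit Arguments.
Unset Strict Implicit.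
Unset Printing Implicit Defensive.
Import Order.TTheory GRing.Theory Num.Theory.
Local Open Scope ring_scope.

Definition unique_argmax_nonneg (R : numDomainType) (h : R -> R) (q : R) : Prop :=
  0 <= q /\ forall x : R, 0 <= x -> x != q -> h x < h q.

Section SeparableSimplexMax.
Variables (R : realType) (N : nat) (f : 'I_N -> R -> R) (m : R) (q : 'I_N -> R).
Hypothesis q_max : forall i, unique_argmax_nonneg (fun x => f i x - m * x) (q i).
Hypothesis sum_q : \sum_i q i = 1.

Lemma simplex_argmax : simplex q.
Proof. by split => // i; case: (q_max i). Qed.

Lemma sum_shiftE (p : 'I_N -> R) : simplex p ->
  \sum_i f i (p i) - \sum_i f i (q i) =
  \sum_i (f i (p i) - m * p i) - \sum_i (f i (q i) - m * q i).
Proof.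
case=> _ sum_p; rewrite !sumrB -!mulr_sumr sum_p sum_q.
by rewrite opprB addrA subrK.
Qed.

Lemma separable_simplex_le (p : 'I_N -> R) : simplex p ->
  \sum_i f i (p i) <= \sum_i f i (q i).
Proof.
move=> sp; rewrite -subr_le0 sum_shiftE // subr_le0.
apply: ler_sum => i _; have [_ lt_q] := q_max i.
have [-> //|ne_q] := eqVneq (p i) (q i).
exact/ltW/lt_q/ne_q/sp.1.
Qed.

Lemma separable_simplex_eq (p : 'I_N -> R) : simplex p ->
  \sum_i f i (p i) = \sum_i f i (q i) -> p =1 q.
Proof.
move=> sp eq_pq i; apply: contra_eq eq_pq => ne_q; apply/negbT/lt_eqF.
rewrite -subr_lt0 sum_shiftE // subr_lt0 (bigD1 i) //= [ltRHS](bigD1 i) //=.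
apply: ltr_leD; first by have [_ lt_q] := q_max i; exact/lt_q/ne_q/sp.1.
apply: ler_sum => j _; have [_ lt_q] := q_max j.
have [-> //|ne_qj] := eqVneq (p j) (q j).
exact/ltW/lt_q/ne_qj/sp.1.
Qed.

End SeparableSimplexMax.

Definition gain (R : realFieldType) (lam a x : R) : R := x / (1 + 2 * lam * x) * a.

Section GainArgmax.
Variables (R : realFieldType) (lam b c : R).
Hypotheses (lam_gt0 : 0 < lam) (c_gt0 : 0 < c).

Lemma gain_denom_gt0 (x : R) : 0 <= x -> 0 < 1 + 2 * lam * x.
Proof. by move=> x_ge0; rewrite ltr_wpDr // !mulr_ge0 // ltW. Qed.

Lemma gain_argmax0 : 0 <= b <= c ->
  unique_argmax_nonneg (fun x => gain lam (b ^+ 2) x - c ^+ 2 * x) 0.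
Proof.
case/andP=> b_ge0 b_le_c; split=> // x x_ge0 x_ne0.
have x_gt0 : 0 < x by rewrite lt_def x_ne0.
have sq_le : x * b ^+ 2 <= x * c ^+ 2 by rewrite ler_pM2l // ler_pXn2r // nnegrE ltW.
have quad_gt0 : 0 < lam * c ^+ 2 * (x * x) by rewrite !mulr_gt0 // exprn_gt0.
rewrite /gain !(mul0r, mulr0, subr0) subr_lt0 mulrAC ltr_pdivrMr; first nra.
exact: gain_denom_gt0.
Qed.

Lemma gain_argmax_interior : c < b ->
  unique_argmax_nonneg (fun x => gain lam (b ^+ 2) x - c ^+ 2 * x)
    ((2 * lam)^-1 * (b / c - 1)).
Proof.
move=> c_lt_b; set q := (2 * lam)^-1 * _.
have q_ge0 : 0 <= q.
  apply: mulr_ge0; first by rewrite invr_ge0 mulr_ge0 // ltW.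
  by rewrite subr_ge0 ler_pdivlMr // mul1r ltW.
split=> // x x_ge0 x_ne_q; rewrite -subr_gt0.
have u_gt0 : 0 < 1 + 2 * lam * x by exact: gain_denom_gt0.
(* completing the square in u = 1 + 2 lam x, the optimum being at u = b / c *)
have -> : gain lam (b ^+ 2) q - c ^+ 2 * q - (gain lam (b ^+ 2) x - c ^+ 2 * x)
    = (c * (1 + 2 * lam * x) - b) ^+ 2 / (2 * lam * (1 + 2 * lam * x)).
  have u_q : 1 + 2 * lam * q = b / c by rewrite /q; field; rewrite !gt_eqF.
  rewrite /gain u_q /q; field.
  by rewrite !gt_eqF // (lt_trans c_gt0 c_lt_b).
apply: divr_gt0; last by rewrite !mulr_gt0.
rewrite exprn_even_gt0 //= subr_eq0; apply: contra x_ne_q => /eqP u_x.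
by apply/eqP; rewrite /q -u_x; field; rewrite !gt_eqF.
Qed.

Lemma gain_argmax (b_ge0 : 0 <= b) :
  unique_argmax_nonneg (fun x => gain lam (b ^+ 2) x - c ^+ 2 * x)
    (Num.max 0 ((2 * lam)^-1 * (b / c - 1))).
Proof.
have [b_le_c | c_lt_b] := leP b c.
  rewrite max_l; first by apply: gain_argmax0; rewrite b_ge0.
  by rewrite pmulr_rle0 ?invr_gt0 ?mulr_gt0 // subr_le0 ler_pdivrMr ?mul1r.
have argmax_b := gain_argmax_interior c_lt_b.
by rewrite max_r //; case: argmax_b.
Qed.

End GainArgmax.

Section Aset.
Variables (N : nat) (l : {perm 'I_N}).

Lemma mem_Aset (n : nat) (i : 'I_N) : (i \in Aset l n) = ((l^-1)%g i < n)%N.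
Proof. by rewrite -{1}(permKV l i) mem_imset ?inE //; exact: perm_inj. Qed.

Lemma card_Aset (n : nat) : (n <= N)%N -> #|Aset l n| = n.
Proof.
move=> le_nN; rewrite card_imset; last exact: perm_inj.
by rewrite cardsE -sum1_card (big_ord_narrow le_nN) sum1_card card_ord.
Qed.

Lemma big_notin_AsetS (V : nmodType) (F : 'I_N -> V) (i : 'I_N) :
  \sum_(j | j \notin Aset l i) F j = F (l i) + \sum_(j | j \notin Aset l i.+1) F j.
Proof.
rewrite (bigD1 (l i)) /=; last by rewrite mem_Aset permK ltnn.
congr (_ + _); apply: eq_bigl => j.
rewrite !mem_Aset [in RHS]ltnS [in RHS]leq_eqVlt negb_or val_eqE.
by rewrite (canF_eq (permKV l)) andbC.
Qed.

End Aset.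

Definition threshold (R : realType) (N : nat) (lam : R) (alpha : 'I_N -> R)
    (l : {perm 'I_N}) (k : nat) : R :=
  (\sum_(j < N | j \notin Aset l k) Num.sqrt (alpha j)) / ((N - k)%:R + 2 * lam).

Section Threshold.
Variables (R : realType) (N : nat) (lam : R) (alpha : 'I_N -> R).
Variables (l : {perm 'I_N}) (k : 'I_N).
Hypotheses (lam_gt0 : 0 < lam) (alpha_ge0 : forall i, 0 <= alpha i).
Hypothesis alpha_sorted : forall i j : 'I_N, (i <= j)%N -> alpha (l i) <= alpha (l j).
Hypothesis kcond_k : kcond lam alpha l k.
Hypothesis kcond_lt_k : forall i : 'I_N, (i < k)%N -> ~ kcond lam alpha l i.

Local Notation A := (Aset l k).
Local Notation S := (\sum_(j < N | j \notin A) Num.sqrt (alpha j)).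
Local Notation M := ((N - k)%:R + 2 * lam).
Local Notation c := (threshold lam alpha l k).

Lemma scale_gt0 : 0 < M.
Proof. by rewrite ltr_wpDl ?ler0n ?mulr_gt0. Qed.

Lemma threshold_lt_sqrt_lk : c < Num.sqrt (alpha (l k)).
Proof. by rewrite ltr_pdivrMr ?scale_gt0 // mulrC. Qed.

Lemma sum_sqrt_notin_gt0 : 0 < S.
Proof.
have sqrt_lk_gt0 : 0 < Num.sqrt (alpha (l k)).
  rewrite -(pmulr_rgt0 _ scale_gt0); apply: le_lt_trans kcond_k.
  by rewrite sumr_ge0 // => j _; exact: sqrtr_ge0.
apply: lt_le_trans sqrt_lk_gt0 _.
rewrite (bigD1 (l k)) /=; last by rewrite mem_Aset permK ltnn.
by rewrite lerDl sumr_ge0 // => j _; exact: sqrtr_ge0.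
Qed.

Lemma threshold_gt0 : 0 < c.
Proof. by rewrite divr_gt0 ?sum_sqrt_notin_gt0 ?scale_gt0. Qed.

Lemma threshold_lt_sqrt (i : 'I_N) : i \notin A -> c < Num.sqrt (alpha i).
Proof.
rewrite mem_Aset -leqNgt => le_k_i; apply: lt_le_trans threshold_lt_sqrt_lk _.
by rewrite ler_sqrt // -(permKV l i) alpha_sorted.
Qed.

Lemma sqrt_le_threshold (i : 'I_N) : i \in A -> Num.sqrt (alpha i) <= c.
Proof.
rewrite mem_Aset => lt_i_k.
have k_gt0 : (0 < k)%N := leq_ltn_trans (leq0n _) lt_i_k.
pose k' := Ordinal (leq_ltn_trans (leq_pred k) (ltn_ord k)).
have lt_k'_k : (k' < k)%N by rewrite /= ltn_predL.
have /negP := kcond_lt_k lt_k'_k.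
rewrite /kcond -leNgt big_notin_AsetS /= prednK //.
have -> : (N - k.-1 = (N - k).+1)%N by have := ltn_ord k; lia.
rewrite -natr1 addrAC mulrDl mul1r [leRHS]addrC lerD2r => le_k'.
apply: le_trans (_ : Num.sqrt (alpha (l k')) <= c).
  by rewrite ler_sqrt // -{1}(permKV l i) alpha_sorted //= -ltnS prednK.
by rewrite ler_pdivlMr ?scale_gt0 // mulrC.
Qed.

Lemma pbarE (i : 'I_N) :
  pbar lam alpha l k i = Num.max 0 ((2 * lam)^-1 * (Num.sqrt (alpha i) / c - 1)).
Proof.
have inv2lam_gt0 : 0 < (2 * lam)^-1 by rewrite invr_gt0 mulr_gt0.
rewrite /pbar; case: ifP => [iA | /negbT iNA].
  rewrite max_l // pmulr_rle0 // subr_le0 ler_pdivrMr ?threshold_gt0 // mul1r.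
  exact: sqrt_le_threshold.
rewrite max_r; last first.
  rewrite pmulr_rge0 // subr_ge0 ler_pdivlMr ?threshold_gt0 // mul1r.
  exact/ltW/threshold_lt_sqrt.
rewrite /threshold; congr (_ * (_ - _)); field.
by rewrite !gt_eqF ?sum_sqrt_notin_gt0 ?scale_gt0.
Qed.

Lemma sum_pbar : \sum_i pbar lam alpha l k i = 1.
Proof.
rewrite (bigID (mem A)) /= big1 ?add0r => [|i iA]; last by rewrite /pbar iA.
under eq_bigr => i iNA do rewrite /pbar (negbTE iNA) mulrBr mulr1.
rewrite sumrB -mulr_sumr -mulr_suml -mulr_sumr sumr_const.
have -> : #|(fun i : 'I_N => i \notin A)| = (N - k)%N.
  have le_kN : (k <= N)%N := ltnW (ltn_ord k).
  by apply/eqP; rewrite -(eqn_add2l #|A|) cardC card_ord card_Aset // subnKC.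
rewrite mulfK ?gt_eqF ?sum_sqrt_notin_gt0 //.
rewrite -(mulr_natr (2 * lam)^-1) -mulrBr addrAC subrr add0r.
by rewrite mulVf // gt_eqF // mulr_gt0.
Qed.

End Threshold.

Theorem proposition2p3 (R : realType) (N : nat) (lam : R) (alpha : 'I_N -> R)
  (l : {perm 'I_N}) (k : 'I_N) :
  (0 < N)%N ->
  0 < lam ->
  (forall i, 0 <= alpha i) ->
  (forall i j : 'I_N, (i <= j)%N -> alpha (l i) <= alpha (l j)) ->
  (forall i : 'I_N, (i.+1 = N)%N -> 0 < alpha (l i)) ->
  (* k is the minimum of { i in {0,...,N-1} : kcond i } *)
  kcond lam alpha l k ->
  (forall i : 'I_N, (i < k)%N -> ~ kcond lam alpha l i) ->
  simplex (pbar lam alpha l k) /\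
  (forall p, simplex p -> objective lam alpha p <= objective lam alpha (pbar lam alpha l k)) /\
  (forall p, simplex p -> objective lam alpha p = objective lam alpha (pbar lam alpha l k) ->
     forall i, p i = pbar lam alpha l k i).
Proof.
move=> _ lam_gt0 alpha_ge0 alpha_sorted _ kcond_k kcond_lt_k.
set c := threshold lam alpha l k.
have c_gt0 : 0 < c by exact: threshold_gt0.
have pbar_argmax i : unique_argmax_nonneg
    (fun x => gain lam (alpha i) x - c ^+ 2 * x) (pbar lam alpha l k i).
  rewrite pbarE // -{1}(sqr_sqrtr (alpha_ge0 i)).
  exact: gain_argmax (sqrtr_ge0 _).
have sum_pbar1 : \sum_i pbar lam alpha l k i = 1 by exact: sum_pbar.
split; first exact: simplex_argmax pbar_argmax sum_pbar1.
split=> p p_simplex.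
  by have := separable_simplex_le pbar_argmax sum_pbar1 p_simplex.
by have := separable_simplex_eq pbar_argmax sum_pbar1 p_simplex.
Qed.
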